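(* Let $A$ be an integral residuated $\vee$-semilattice. Then: (1) if $A$ is a $\to$-MTL-algebra, the $\to$-prime filters of $A$ are exactly the $\vee$-prime filters of $A$; (2) if $A$ is a $\leadsto$-MTL-algebra, the $\leadsto$-prime filters of $A$ are exactly the $\vee$-prime filters of $A$; (3) if $A$ is a pseudo MTL-algebra, the prime filters of $A$ are exactly the $\vee$-prime filters of $A$.
   Context: A residuated poset is a partially ordered semigroup $(A;\cdot,\le)$ with binary operations $\to,\leadsto$ such that $x\cdot y\le z$ iff $x\le y\to z$ iff $y\le x\leadsto z$. It is a residuated $\vee$-semilattice if $(A,\le)$ is a join-semilattice, and integral if it has a greatest element $1$ that is a multiplicative identity. A filter is a nonempty upward closed subset closed under $\cdot$. A filter $F$ is $\to$-prime if for all $x,y$, $x\to y\in F$ or $y\to x\in F$; $\leadsto$-prime if for all $x,y$, $x\leadsto y\in F$ or $y\leadsto x\in F$; prime if both; $\vee$-prime if $x\vee y\in F$ implies $x\in F$ or $y\in F$. $A$ is a $\to$-MTL-algebra if $(x\to y)\vee(y\to x)=1$ for all $x,y$; a $\leadsto$-MTL-algebra if $(x\leadsto y)\vee(y\leadsto x)=1$ for all $x,y$; a pseudo MTL-algebra if both. *)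

Set Implicit Arguments.

Record IRJSL := {
  car :> Type;
  le : car -> car -> Prop;
  mul : car -> car -> car;
  imp : car -> car -> car;    (* -> *)
  limp : car -> car -> car;   (* ~> *)
  join : car -> car -> car;
  one : car;
  le_refl : forall x, le x x;
  le_antisym : forall x y, le x y -> le y x -> x = y;
  le_trans : forall x y z, le x y -> le y z -> le x z;
  mul_assoc : forall x y z, mul (mul x y) z = mul x (mul y z);
  mul_monol : forall x y z, le x y -> le (mul x z) (mul y z);
  mul_monor : forall x y z, le x y -> le (mul z x) (mul z y);
  residuation_imp : forall x y z, le (mul x y) z <-> le x (imp y z);
  residuation_limp : forall x y z, le (mul x y) z <-> le y (limp x z);
  join_ubl : forall x y, le x (join x y);
  join_ubr : forall x y, le y (join x y);
  join_lub : forall x y z, le x z -> le y z -> le (join x y) z;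
  one_top : forall x, le x one;
  mul_1l : forall x, mul one x = x;
  mul_1r : forall x, mul x one = x
}.

Section Defs.
Variable A : IRJSL.

Definition is_filter (F : A -> Prop) : Prop :=
  (exists x, F x) /\
  (forall x y, F x -> le A x y -> F y) /\
  (forall x y, F x -> F y -> F (mul A x y)).

Definition imp_prime (F : A -> Prop) : Prop :=
  forall x y, F (imp A x y) \/ F (imp A y x).

Definition limp_prime (F : A -> Prop) : Prop :=
  forall x y, F (limp A x y) \/ F (limp A y x).

Definition prime (F : A -> Prop) : Prop := imp_prime F /\ limp_prime F.

Definition join_prime (F : A -> Prop) : Prop :=
  forall x y, F (join A x y) -> F x \/ F y.

Definition imp_MTL : Prop :=
  forall x y, join A (imp A x y) (imp A y x) = one A.
Definition limp_MTL : Prop :=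
  forall x y, join A (limp A x y) (limp A y x) = one A.
Definition pseudo_MTL : Prop := imp_MTL /\ limp_MTL.

End Defs.
Arguments is_filter {A} F.
Arguments imp_prime {A} F.
Arguments limp_prime {A} F.
Arguments prime {A} F.
Arguments join_prime {A} F.

(* Since (x -> y) * (x \/ y) <= y, a filter containing x \/ y and x -> y
   contains y; hence ->-primeness of a filter gives \/-primeness. Conversely,
   in a ->-MTL-algebra every filter contains (x -> y) \/ (y -> x) = 1, and
   \/-primeness splits this join. The ~> case is the -> case
   for the opposite semigroup, whose right residual is ~>. *)

From Stdlib Require Import Setoid.

Set Implicit Arguments.

Section Opposite.
Variable A : IRJSL.

Definition IRJSL_op : IRJSL.
Proof.
  refine {| car := A; le := le A; mul := fun x y => mul A y x;
            imp := limp A; limp := imp A; join := join A; one := one A |}.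
  - exact (le_refl A).
  - exact (le_antisym A).
  - exact (le_trans A).
  - intros x y z; symmetry; apply mul_assoc.
  - intros x y z; apply mul_monor.
  - intros x y z; apply mul_monol.
  - intros x y z; apply residuation_limp.
  - intros x y z; apply residuation_imp.
  - exact (join_ubl A).
  - exact (join_ubr A).
  - exact (join_lub A).
  - exact (one_top A).
  - exact (mul_1r A).
  - exact (mul_1l A).
Defined.

Lemma is_filter_op (F : A -> Prop) : @is_filter IRJSL_op F <-> is_filter F.
Proof.
  split; intros [Fne [Fup Fmul]]; split; [| split | | split]; auto;
    intros x y Fx Fy; exact (Fmul y x Fy Fx).
Qed.

End Opposite.

Section Filters.
Variable A : IRJSL.
Implicit Types (x y z : A) (F : A -> Prop).

Lemma join_comm x y : join A x y = join A y x.
Proof. apply le_antisym; apply join_lub; auto using join_ubl, join_ubr. Qed.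

Lemma mul_le_r z x : le A (mul A z x) x.
Proof. rewrite <- (mul_1l A x) at 2; apply mul_monol, one_top. Qed.

Lemma imp_mul_join_le x y : le A (mul A (imp A x y) (join A x y)) y.
Proof.
  apply residuation_limp, join_lub; apply residuation_limp.
  - apply residuation_imp, le_refl.
  - apply mul_le_r.
Qed.

Lemma filter_one F : is_filter F -> F (one A).
Proof. intros [[z Fz] [Fup _]]; exact (Fup _ _ Fz (one_top A z)). Qed.

Lemma filter_modus_ponens {F x y} :
  is_filter F -> F (imp A x y) -> F (join A x y) -> F y.
Proof.
  intros [_ [Fup Fmul]] Fxy Fjoin.
  exact (Fup _ _ (Fmul _ _ Fxy Fjoin) (imp_mul_join_le x y)).
Qed.

Lemma imp_prime_join_prime F : is_filter F -> imp_prime F -> join_prime F.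
Proof.
  intros Ffil Fprime x y Fjoin.
  destruct (Fprime x y) as [Fxy | Fyx].
  - right; exact (filter_modus_ponens Ffil Fxy Fjoin).
  - left; rewrite join_comm in Fjoin; exact (filter_modus_ponens Ffil Fyx Fjoin).
Qed.

Lemma join_prime_imp_prime F :
  imp_MTL A -> F (one A) -> join_prime F -> imp_prime F.
Proof. intros mtl F1 Fprime x y; apply Fprime; rewrite mtl; exact F1. Qed.

Lemma imp_prime_iff_join_prime F :
  imp_MTL A -> is_filter F -> (imp_prime F <-> join_prime F).
Proof.
  intros mtl Ffil; split.
  - exact (imp_prime_join_prime Ffil).
  - exact (join_prime_imp_prime mtl (filter_one Ffil)).
Qed.

End Filters.

Lemma limp_prime_iff_join_prime (A : IRJSL) (F : A -> Prop) :
  limp_MTL A -> is_filter F -> (limp_prime F <-> join_prime F).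
Proof.
  intros mtl Ffil.
  exact (@imp_prime_iff_join_prime (IRJSL_op A) F mtl (proj2 (is_filter_op _ F) Ffil)).
Qed.

Theorem lemma5p4 (A : IRJSL) :
  (imp_MTL A ->
     forall F : A -> Prop, is_filter F -> (imp_prime F <-> join_prime F)) /\
  (limp_MTL A ->
     forall F : A -> Prop, is_filter F -> (limp_prime F <-> join_prime F)) /\
  (pseudo_MTL A ->
     forall F : A -> Prop, is_filter F -> (prime F <-> join_prime F)).
Proof.
  split; [| split].
  - intros mtl F; exact (imp_prime_iff_join_prime mtl).
  - intros mtl F; exact (limp_prime_iff_join_prime mtl).
  - intros [imtl lmtl] F Ffil; unfold prime.
    rewrite (imp_prime_iff_join_prime imtl Ffil), (limp_prime_iff_join_prime lmtl Ffil).
    tauto.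
Qed.
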